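(* In the linear mixture MDP setting with Algorithm 1 as described in the context, on the event $\mathcal{E}_1$ defined in the context, $$\tilde V_1^*(s_1,R_K)\le 6H^2d\sqrt{\frac{\log(4H^3KB^2/\delta)\log(1+KH^2B^2/d)}{K}},$$ where $R_K=\{R_{K,h}\}_h$ is the exploration-driven reward of the final episode $K$.
   Context: Episodic MDP with state set $\mathcal{S}$, action set $\mathcal{A}$, horizon $H$, transitions $P_h(\cdot|s,a)$, fixed initial state $s_1$. For a nonnegative reward $R=\{R_h\}$ define $\tilde V^*_{H+1}(\cdot,R)=0$ and $\tilde V^*_h(s,R)=\max_{a}\min\{R_h(s,a)+\sum_{s'}P_h(s'|s,a)\tilde V^*_{h+1}(s',R),H\}$. Linear mixture MDP: known $\phi:\mathcal{S}\times\mathcal{A}\times\mathcal{S}\to\mathbb{R}^d$ with $\|\sum_{s'}\phi(s,a,s')V(s')\|_2\le1$ for all $V:\mathcal{S}\to[0,1]$, and unknown $\theta_h$, $\|\theta_h\|_2\le B$, with $P_h(s'|s,a)=\theta_h^\top\phi(s,a,s')$. $\|x\|_M=\sqrt{x^\top Mx}$. Algorithm 1 (run for $K$ episodes, failure probability $\delta$): $\lambda=B^{-2}$, $\beta=H\sqrt{d\log(4H^3K\lambda^{-1}\delta^{-1})}+\sqrt\lambda B$, $\mathcal{V}=\{V:\mathcal{S}\to[0,H]\}$. For $k=1,\dots,K$: $V_{k,H+1}\equiv0$; for $h=H,\dots,1$: $\Lambda_{k,h}=\sum_{t<k}\phi_{t,h}(s_{t,h},a_{t,h})\phi_{t,h}(s_{t,h},a_{t,h})^\top+\lambda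 I$; $\hat\theta_{k,h}=\Lambda_{k,h}^{-1}\sum_{t<k}\phi_{t,h}(s_{t,h},a_{t,h})\tilde V_{t,h+1,s_{t,h},a_{t,h}}(s_{t,h+1})$; $\tilde V_{k,h+1,s,a}\in\arg\max_{V\in\mathcal{V}}\|\sum_{s'}\phi(s,a,s')V(s')\|_{\Lambda_{k,h}^{-1}}$; $\phi_{k,h}(s,a)=\sum_{s'}\phi(s,a,s')\tilde V_{k,h+1,s,a}(s')$; $u_{k,h}(s,a)=\beta\|\phi_{k,h}(s,a)\|_{\Lambda_{k,h}^{-1}}$; $R_{k,h}=u_{k,h}$; $Q_{k,h}(s,a)=\min\{\hat\theta_{k,h}^\top\sum_{s'}\phi(s,a,s')V_{k,h+1}(s')+R_{k,h}(s,a)+u_{k,h}(s,a),H\}$; $V_{k,h}(s)=\max_aQ_{k,h}(s,a)$, $\pi_{k,h}(s)\in\arg\max_aQ_{k,h}(s,a)$. Then $\pi_k$ is executed from $s_1$, producing $s_{k,h+1}\sim P_h(\cdot|s_{k,h},a_{k,h})$, $a_{k,h}=\pi_{k,h}(s_{k,h})$. $\mathcal{E}_1$ is the event on which both (i) $\|\hat\theta_{k,h}-\theta_h\|_{\Lambda_{k,h}}\le\beta$ for all $k\in[K],h\in[H]$, and (ii) $\sum_{k=1}^K\sum_{h=1}^H\big(\sum_{s'}P_h(s'|s_{k,h},a_{k,h})V_{k,h+1}(s')-V_{k,h+1}(s_{k,h+1})\big)\le\sqrt{2H^3K\log(4/\delta)}$ hold. *)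

From HB Require Import structures.
From mathcomp Require Import all_boot all_order all_algebra.
From mathcomp Require Import reals exp.
Set Implicit Arguments. Unset Strict Implicit. Unset Printing Implicit Defensive.
Import Order.TTheory GRing.Theory Num.Theory.
Local Open Scope ring_scope.

(* Conventions: episodes k range over 1..K, steps h over 1..H (as in the paper).
   Vectors of R^d are column vectors 'cV[R]_d. *)

Section Defs.
Variables (R : realType) (S A : finType) (d : nat).

(* ||x||_M = sqrt(x^T M x); ||x||_2 = ||x||_{I} *)
Definition wnorm (M : 'M[R]_d) (x : 'cV[R]_d) : R :=
  Num.sqrt ((x^T *m M *m x) ord0 ord0).

Definition phiV (phi : S -> A -> S -> 'cV[R]_d) (s : S) (a : A) (V : S -> R)
  : 'cV[R]_d := \sum_(s' : S) V s' *: phi s a s'.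

(* max over the (nonempty, a0 : A) action set *)
Definition maxA (a0 : A) (f : A -> R) : R := \big[Num.max/f a0]_(a : A) f a.

(* Backward recursion over steps h = H, H-1, ..., 1 with V_{H+1} = 0:
   bwd H step m is the value at step h = H+1-m. *)
Fixpoint bwd (H : nat) (step : nat -> (S -> R) -> (S -> R)) (m : nat) : S -> R :=
  match m with
  | O => fun _ => 0
  | m'.+1 => step (H - m')%N (bwd H step m')
  end.

Definition bwdV (H : nat) (step : nat -> (S -> R) -> (S -> R)) (h : nat) : S -> R :=
  if (1 <= h <= H)%N then bwd H step (H.+1 - h) else (fun _ => 0).

Definition Vstar (a0 : A) (H : nat) (P : nat -> S -> A -> S -> R)
  (Rw : nat -> S -> A -> R) : nat -> S -> R :=
  bwdV H (fun h Vn s =>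
    maxA a0 (fun a => Num.min (Rw h s a + \sum_(s' : S) P h s a s' * Vn s') H%:R)).

Definition lamB (B : R) : R := B ^- 2.

Definition betaB (H K : nat) (B delta : R) : R :=
  H%:R * Num.sqrt (d%:R * ln (4 * H%:R ^+ 3 * K%:R * (lamB B)^-1 * delta^-1))
  + Num.sqrt (lamB B) * B.

Variables (phi : S -> A -> S -> 'cV[R]_d) (B delta : R) (H K : nat)
  (Vt : nat -> nat -> S -> A -> S -> R) (* Vt k h s a = tilde V_{k,h+1,s,a} *)
  (st : nat -> nat -> S) (act : nat -> nat -> A)
  (a0 : A).

Definition featV (k h : nat) (s : S) (a : A) : 'cV[R]_d := phiV phi s a (Vt k h s a).

Definition Lam (k h : nat) : 'M[R]_d :=
  \sum_(1 <= t < k) (featV t h (st t h) (act t h) *m (featV t h (st t h) (act t h))^T)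
  + (lamB B)%:M.

Definition thetahat (k h : nat) : 'cV[R]_d :=
  invmx (Lam k h) *m
  \sum_(1 <= t < k) (Vt t h (st t h) (act t h) (st t h.+1) *: featV t h (st t h) (act t h)).

(* u_{k,h}(s,a) = beta ||phi_{k,h}(s,a)||_{Lambda_{k,h}^{-1}}; also R_{k,h} = u_{k,h} *)
Definition bonus (k h : nat) (s : S) (a : A) : R :=
  betaB H K B delta * wnorm (invmx (Lam k h)) (featV k h s a).

Definition Qalg (k h : nat) (Vn : S -> R) (s : S) (a : A) : R :=
  Num.min (((thetahat k h)^T *m phiV phi s a Vn) ord0 ord0 + bonus k h s a + bonus k h s a)
          H%:R.

Definition Valg (k : nat) : nat -> S -> R :=
  bwdV H (fun h Vn s => maxA a0 (Qalg k h Vn s)).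

Definition Qk (k h : nat) (s : S) (a : A) : R := Qalg k h (Valg k h.+1) s a.

End Defs.

(* Optimism: on E1 the bonus [u_k] dominates the model error, so by backward induction the
   estimated value [V_k] dominates the optimal value of the reward [u_k]. The Gram matrices
   [Lambda_k] increase with [k], hence the bonuses decrease and
   [K V*_1(s1, u_K) <= sum_k V*_1(s1, u_k) <= sum_k V_{k,1}(s1)].
   Along the trajectory [V_{k,1}(s1)] telescopes into one-step excesses, each at most
   [min (3 u_{k,h}, H)], plus the martingale term of E1 (ii). Cauchy-Schwarz over the episodes
   and the elliptical potential lemma ([det Lambda_{K+1,h}] is [lambda^d] times the product of the
   [1 + ||phi_{k,h}||^2_{Lambda_{k,h}^-1}], and is at most [(tr Lambda_{K+1,h} / d)^d] by Hadamard's
   inequality and AM-GM) bound [sum_k min (3 u_{k,h}, H)] by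
   [beta sqrt (10 K d log (1 + K H^2 B^2 / d))]; dividing by [K] gives the rate. *)

From Pilot Require Import Defs.
From HB Require Import structures.
From mathcomp Require Import all_boot all_order all_algebra.
From mathcomp Require Import reals sequences exp.
From mathcomp Require Import ring lra zify.
Import Order.TTheory GRing.Theory Num.Theory.
Local Open Scope ring_scope.
Set Implicit Arguments. Unset Strict Implicit. Unset Printing Implicit Defensive.

Section QuadraticForm.
Variable R : realFieldType.

Definition bform n (M : 'M[R]_n) (x y : 'cV[R]_n) : R := (x^T *m M *m y) 0 0.
Definition qform n (M : 'M[R]_n) (x : 'cV[R]_n) : R := bform M x x.
Definition vdot n (x y : 'cV[R]_n) : R := (x^T *m y) 0 0.

Lemma vdotC n (x y : 'cV[R]_n) : vdot x y = vdot y x.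
Proof. by rewrite /vdot !mxE; apply: eq_bigr => i _; rewrite !mxE mulrC. Qed.

Lemma vdot_self n (x : 'cV[R]_n) : vdot x x = \sum_i x i 0 ^+ 2.
Proof. by rewrite /vdot mxE; apply: eq_bigr => i _; rewrite mxE expr2. Qed.

Lemma vdot_self_ge0 n (x : 'cV[R]_n) : 0 <= vdot x x.
Proof. by rewrite vdot_self; apply: sumr_ge0 => i _; apply: sqr_ge0. Qed.

Lemma vdot_self_eq0 n (x : 'cV[R]_n) : vdot x x = 0 -> x = 0.
Proof.
rewrite vdot_self => /eqP; rewrite psumr_eq0 => [/allP x0|i _]; last exact: sqr_ge0.
apply/matrixP => i j; rewrite (ord1 j) mxE.
by have := x0 i (mem_index_enum _); rewrite sqrf_eq0 => /eqP.
Qed.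

Lemma bform1 n (x y : 'cV[R]_n) : bform 1%:M x y = vdot x y.
Proof. by rewrite /bform mulmx1. Qed.

Lemma bformC n (M : 'M[R]_n) x y : M^T = M -> bform M x y = bform M y x.
Proof.
move=> sM; rewrite /bform -[in LHS](trmxK (x^T *m M *m y)) [in LHS]mxE.
by rewrite !trmx_mul trmxK sM mulmxA.
Qed.

Lemma bformDl n (M : 'M[R]_n) x y z : bform M (x + y) z = bform M x z + bform M y z.
Proof. by rewrite /bform linearD /= !mulmxDl mxE. Qed.

Lemma bformDr n (M : 'M[R]_n) x y z : bform M z (x + y) = bform M z x + bform M z y.
Proof. by rewrite /bform !mulmxDr mxE. Qed.

Lemma bformZl n (M : 'M[R]_n) a x z : bform M (a *: x) z = a * bform M x z.
Proof. by rewrite /bform linearZ /= -!scalemxAl mxE. Qed.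

Lemma bformZr n (M : 'M[R]_n) a x z : bform M z (a *: x) = a * bform M z x.
Proof. by rewrite /bform -!scalemxAr mxE. Qed.

Lemma bform_sum n I (r : seq I) (P : pred I) (F : I -> 'M[R]_n) x y :
  bform (\sum_(i <- r | P i) F i) x y = \sum_(i <- r | P i) bform (F i) x y.
Proof. by rewrite /bform mulmx_sumr mulmx_suml summxE. Qed.

Lemma bform_mulinvmx n (M : 'M[R]_n) y z : M \in unitmx ->
  bform M y (invmx M *m z) = vdot y z.
Proof. by move=> uM; rewrite /bform mulmxA -(mulmxA _ M) mulmxV // mulmx1. Qed.

Lemma qformD n (M : 'M[R]_n) x y : M^T = M ->
  qform M (x + y) = qform M x + 2 * bform M x y + qform M y.
Proof. by move=> sM; rewrite /qform !(bformDl, bformDr) (bformC y x) //; ring. Qed.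

Lemma qformZ n (M : 'M[R]_n) a x : qform M (a *: x) = a ^+ 2 * qform M x.
Proof. by rewrite /qform bformZl bformZr mulrA expr2. Qed.

Lemma qform_add n (M N : 'M[R]_n) x : qform (M + N) x = qform M x + qform N x.
Proof. by rewrite /qform /bform mulmxDr mulmxDl mxE. Qed.

Lemma qform_scalar n (a : R) (x : 'cV[R]_n) : qform a%:M x = a * vdot x x.
Proof. by rewrite /qform /bform mul_mx_scalar -scalemxAl mxE. Qed.

Lemma qform_outer n (x y : 'cV[R]_n) : qform (x *m x^T) y = vdot y x ^+ 2.
Proof.
rewrite /qform /bform mulmxA [y^T *m x]mx11_scalar mul_scalar_mx -scalemxAl mxE.
by rewrite expr2 -/(vdot y x) vdotC.
Qed.

Lemma qform_invmx n (M : 'M[R]_n) z : M^T = M -> M \in unitmx ->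
  qform (invmx M) z = qform M (invmx M *m z).
Proof.
move=> sM uM; rewrite /qform /bform trmx_mul trmx_inv sM.
by rewrite -!mulmxA (mulmxA M) mulmxV // mul1mx.
Qed.

End QuadraticForm.

Section PositiveForms.
Variable R : realFieldType.

Definition psdmx n (M : 'M[R]_n) := forall x, 0 <= qform M x.

Definition ge_scalar_mx n (mu : R) (M : 'M[R]_n) := forall x, mu * vdot x x <= qform M x.

Lemma psdmx1 n : psdmx (1%:M : 'M[R]_n).
Proof. by move=> x; rewrite /qform bform1 vdot_self_ge0. Qed.

Lemma psdmx_outer n (x : 'cV[R]_n) : psdmx (x *m x^T).
Proof. by move=> y; rewrite qform_outer sqr_ge0. Qed.

Lemma psdmx_sum n I (r : seq I) (P : pred I) (F : I -> 'M[R]_n) :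
  (forall i, P i -> psdmx (F i)) -> psdmx (\sum_(i <- r | P i) F i).
Proof. by move=> psdF y; rewrite /qform bform_sum; apply: sumr_ge0 => i /psdF; apply. Qed.

Lemma sum_outer_sym n I (r : seq I) (P : pred I) (x : I -> 'cV[R]_n) :
  (\sum_(i <- r | P i) x i *m (x i)^T)^T = \sum_(i <- r | P i) x i *m (x i)^T.
Proof. by rewrite linear_sum; apply: eq_bigr => i _; rewrite /= trmx_mul trmxK. Qed.

Lemma psdmx_sum_outer n I (r : seq I) (P : pred I) (x : I -> 'cV[R]_n) :
  psdmx (\sum_(i <- r | P i) x i *m (x i)^T).
Proof. by apply: psdmx_sum => i _; apply: psdmx_outer. Qed.

Lemma ge_scalar_mx_psd n mu (M : 'M[R]_n) : 0 <= mu -> ge_scalar_mx mu M -> psdmx M.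
Proof. by move=> mu0 geM x; apply: le_trans (geM x); rewrite mulr_ge0 ?vdot_self_ge0. Qed.

Lemma ge_scalar_mx_diag n mu (M : 'M[R]_n) i : ge_scalar_mx mu M -> mu <= M i i.
Proof.
move=> /(_ (delta_mx i 0)).
by rewrite /qform /bform /vdot trmx_delta mul_delta_mx mxE !eqxx mulr1 -rowE -colE !mxE.
Qed.

Lemma ge_scalar_mx_unit n mu (M : 'M[R]_n) : 0 < mu -> ge_scalar_mx mu M -> M \in unitmx.
Proof.
move=> mu0 geM; rewrite unitmxE unitfE; apply/negP => /det0P [v vn0 vM].
have := geM v^T; rewrite /qform /bform trmxK vM mul0mx mxE pmulr_rle0 // => v0.
have /vdot_self_eq0/(congr1 trmx) : vdot v^T v^T = 0.
  by apply/eqP; rewrite eq_le v0 vdot_self_ge0.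
by rewrite trmxK trmx0 => v_eq0; rewrite v_eq0 eqxx in vn0.
Qed.

Lemma bform_sqr_le n (M : 'M[R]_n) x y : M^T = M -> psdmx M ->
  bform M x y ^+ 2 <= qform M x * qform M y.
Proof.
move=> sM psdM; set p := qform M x; set b := bform M x y; set c := qform M y.
have quad t : 0 <= p * t ^+ 2 + 2 * t * b + c.
  have := psdM (t *: x + y); rewrite qformD // qformZ bformZl -/p -/b -/c.
  by rewrite (mulrC p) mulrA.
have p0 : 0 <= p by apply: psdM.
have c0 : 0 <= c by apply: psdM.
have [pp|] := ltrP 0 p.
  have := quad (- b / p).
  have -> : p * (- b / p) ^+ 2 + 2 * (- b / p) * b + c = c - b ^+ 2 / p.
    by field; rewrite gt_eqF.
  by rewrite subr_ge0 ler_pdivrMr // mulrC.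
move=> p_le0; have {p_le0 p0} p_eq0 : p = 0 by apply/eqP; rewrite eq_le p_le0 p0.
have [->|b_neq0] := eqVneq b 0; first by rewrite p_eq0 mul0r expr0n.
(* a nonconstant affine function of [t] cannot stay nonnegative *)
have := quad (- (c + 1) / (2 * b)).
have -> : 2 * (- (c + 1) / (2 * b)) * b = - (c + 1) by field.
by rewrite p_eq0 mul0r add0r; lra.
Qed.

Lemma vdot_sqr_le n (M : 'M[R]_n) y z : M^T = M -> M \in unitmx -> psdmx M ->
  vdot y z ^+ 2 <= qform M y * qform (invmx M) z.
Proof.
move=> sM uM psdM; rewrite qform_invmx // -(bform_mulinvmx y z uM).
exact: bform_sqr_le.
Qed.

Lemma qform_invmx_ge0 n (M : 'M[R]_n) z : M^T = M -> M \in unitmx -> psdmx M ->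
  0 <= qform (invmx M) z.
Proof. by move=> sM uM psdM; rewrite qform_invmx. Qed.

Lemma qform_invmxD_le n (M N : 'M[R]_n) z : M^T = M -> N^T = N ->
  M \in unitmx -> M + N \in unitmx -> psdmx M -> psdmx N ->
  qform (invmx (M + N)) z <= qform (invmx M) z.
Proof.
move=> sM sN uM uMN psdM psdN.
have sMN : (M + N)^T = M + N by rewrite linearD /= sM sN.
set y := invmx (M + N) *m z.
have ry : qform (invmx (M + N)) z = vdot y z by rewrite qform_invmx // /qform bform_mulinvmx.
have qMN : qform (M + N) y = vdot y z by rewrite /qform bform_mulinvmx.
have qM : qform M y <= vdot y z by rewrite -qMN qform_add lerDl.
have r0 : 0 <= vdot y z by rewrite -qMN qform_add addr_ge0.
have c0 : 0 <= qform (invmx M) z by apply: qform_invmx_ge0.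
rewrite ry; set r := vdot y z in qM r0 *; set c := qform (invmx M) z in c0 *.
have : r ^+ 2 <= r * c.
  by apply: le_trans (vdot_sqr_le y z sM uM psdM) _; rewrite ler_wpM2r.
by case: (ltrP 0 r) => [rp|r_le0 _]; [rewrite expr2 ler_pM2l | apply: le_trans r_le0 c0].
Qed.

End PositiveForms.

Section Determinants.
Variable R : realFieldType.

Lemma det1_add_mul n (u v : 'cV[R]_n) : \det (1%:M + u *m v^T) = 1 + (v^T *m u) 0 0.
Proof.
(* factor the block matrix [[1, -u], [v^T, 1]] in two ways *)
pose X := block_mx (1%:M : 'M_n) (- u) v^T (1%:M : 'M_1).
have eX1 : X = block_mx (1%:M + u *m v^T) (- u) 0 1%:M *m block_mx 1%:M 0 v^T 1%:M.
  by rewrite mulmx_block !mulmx1 !mul0mx !mulmx0 !mul1mx !add0r ?addr0 mulNmx addrK.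
have eX2 : X = block_mx 1%:M 0 v^T 1%:M *m block_mx 1%:M (- u) 0 (1%:M + v^T *m u).
  by rewrite mulmx_block !mulmx1 !mul0mx !mulmx0 !mul1mx ?add0r ?addr0 mulmxN addrC addrK.
have := congr1 determinant (etrans (esym eX1) eX2).
rewrite !det_mulmx (det_lblock (1%:M : 'M[R]_n)) (det_ublock (1%:M : 'M[R]_n)).
rewrite (det_ublock (1%:M + u *m v^T)) !(@det1 _ n) !(@det1 _ 1) !mulr1 !mul1r => ->.
by rewrite det_mx11 !mxE.
Qed.

Lemma det_add_outer n (M : 'M[R]_n) x : M \in unitmx ->
  \det (M + x *m x^T) = \det M * (1 + qform (invmx M) x).
Proof.
move=> uM; have -> : M + x *m x^T = M *m (1%:M + (invmx M *m x) *m x^T).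
  by rewrite mulmxDr mulmx1 !mulmxA mulmxV // mul1mx.
by rewrite det_mulmx det1_add_mul /qform /bform mulmxA.
Qed.

Definition schur_compl n (M : 'M[R]_(1 + n)) : 'M[R]_n :=
  drsubmx M - (ulsubmx M 0 0)^-1 *: (dlsubmx M *m ursubmx M).

Section Schur.
Variables (n : nat) (M : 'M[R]_(1 + n)).
Hypothesis sM : M^T = M.
Local Notation a := (ulsubmx M 0 0).

Lemma det_schur_compl : a != 0 -> \det M = a * \det (schur_compl M).
Proof.
move=> a_neq0; have ea : ulsubmx M = a%:M by rewrite {1}[ulsubmx M]mx11_scalar.
have factM : M = block_mx 1%:M 0 (a^-1 *: dlsubmx M) 1%:M *m
              block_mx (ulsubmx M) (ursubmx M) 0 (schur_compl M).
  rewrite mulmx_block !mul1mx !mul0mx ?addr0 ?mulmx0 ?add0r -!scalemxAl.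
  rewrite [in dlsubmx M *m ulsubmx M]ea mul_mx_scalar scalerA mulVf // scale1r.
  by rewrite /schur_compl addrC subrK submxK.
rewrite {1}factM det_mulmx det_lblock det_ublock !(@det1 _ 1) !(@det1 _ n) !mul1r.
by rewrite det_mx11.
Qed.

Lemma schur_compl_sym : (schur_compl M)^T = schur_compl M.
Proof.
by rewrite /schur_compl linearB /= linearZ /= trmx_mul trmx_drsub trmx_ursub trmx_dlsub sM.
Qed.

Lemma schur_compl_diag i : 0 < a -> schur_compl M i i <= drsubmx M i i.
Proof.
move=> a_gt0; rewrite /schur_compl !mxE big_ord1.
have -> : dlsubmx M i 0 = ursubmx M 0 i by rewrite -[in LHS]sM -trmx_ursub mxE.
rewrite lerBlDr lerDl.
apply: mulr_ge0; last exact: sqr_ge0.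
by move: a_gt0; rewrite !mxE invr_ge0 => /ltW.
Qed.

(* the test vector [col_mx t y] with [t = - a^-1 b y] makes [M] act as its Schur complement *)
Lemma schur_compl_ge_scalar mu : 0 < mu -> ge_scalar_mx mu M ->
  ge_scalar_mx mu (schur_compl M).
Proof.
move=> mu0 geM y.
have a_gt0 : 0 < a.
  by apply: lt_le_trans mu0 _; rewrite !mxE; exact: ge_scalar_mx_diag.
have ea : ulsubmx M = a%:M by rewrite {1}[ulsubmx M]mx11_scalar.
set t := - (a^-1 *: (ursubmx M *m y)); set w := col_mx t y.
have Mw : M *m w = col_mx 0 (schur_compl M *m y).
  rewrite -{1}[M]submxK mul_block_col ea mul_scalar_mx /t scalerN scalerA mulfV ?gt_eqF //.
  rewrite scale1r addNr; congr col_mx.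
  by rewrite /schur_compl mulmxN -scalemxAr mulmxBl -scalemxAl mulmxA addrC.
have qw : qform M w = qform (schur_compl M) y.
  by rewrite /qform /bform -mulmxA Mw tr_col_mx mul_row_col mulmx0 add0r mulmxA.
have vw : vdot w w = vdot t t + vdot y y by rewrite /vdot tr_col_mx mul_row_col mxE.
rewrite -qw; apply: le_trans (geM w); rewrite vw.
by apply: ler_wpM2l; [exact: ltW | rewrite lerDr vdot_self_ge0].
Qed.

End Schur.

Lemma det_le_prod_diag n mu (M : 'M[R]_n) : 0 < mu -> M^T = M -> ge_scalar_mx mu M ->
  \det M <= \prod_i M i i.
Proof.
elim: n M => [|n IHn] M mu0 sM geM; first by rewrite det_mx00 big_ord0.
move: M sM geM; change (forall M : 'M[R]_(1 + n), M^T = M -> ge_scalar_mx mu M ->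
  \det M <= \prod_(i < 1 + n) M i i) => M sM geM.
have a_gt0 : 0 < ulsubmx M 0 0.
  by apply: lt_le_trans mu0 _; rewrite !mxE; exact: ge_scalar_mx_diag.
have geS := schur_compl_ge_scalar mu0 geM.
rewrite (det_schur_compl (lt0r_neq0 a_gt0)) big_split_ord big_ord1 /=.
have -> : M (lshift n 0) (lshift n 0) = ulsubmx M 0 0 by rewrite !mxE.
rewrite ler_pM2l //; apply: le_trans (IHn _ mu0 (schur_compl_sym sM) geS) _.
apply: ler_prod => i _.
have -> : M (rshift 1 i) (rshift 1 i) = drsubmx M i i by rewrite !mxE.
rewrite schur_compl_diag // andbT.
exact: le_trans (ltW mu0) (ge_scalar_mx_diag i geS).
Qed.

Lemma det_le_mxtrace n mu (M : 'M[R]_n) : (0 < n)%N -> 0 < mu -> M^T = M ->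
  ge_scalar_mx mu M -> \det M <= (\tr M / n%:R) ^+ n.
Proof.
move=> n_gt0 mu0 sM geM; apply: le_trans (det_le_prod_diag mu0 sM geM) _.
have := leif_AGM (A := predT) (E := fun i => M i i); rewrite /= cardT size_enum_ord.
move=> /(_ (fun i _ => le_trans (ltW mu0) (ge_scalar_mx_diag i geM))) [+ _].
by rewrite /mxtrace.
Qed.

End Determinants.

Section RealInequalities.
Variable R : realType.
Implicit Types x y a b c q : R.

Lemma ln_le_ln x y : 0 < x -> x <= y -> ln x <= ln y.
Proof. by move=> x0 xy; rewrite ler_ln // posrE //; apply: lt_le_trans xy. Qed.

Lemma ln_prod (I : Type) (r : seq I) (F : I -> R) : (forall i, 0 < F i) ->
  ln (\prod_(i <- r) F i) = \sum_(i <- r) ln (F i).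
Proof.
move=> F_gt0; elim: r => [|i r IHr]; first by rewrite !big_nil ln1.
by rewrite !big_cons lnM ?IHr // posrE // prodr_gt0.
Qed.

Lemma sqrtr_le x c : 0 <= c -> x <= c ^+ 2 -> Num.sqrt x <= c.
Proof. by move=> c0 xc; rewrite -(ger0_norm c0) -sqrtr_sqr ler_sqrt // sqr_ge0. Qed.

Lemma le_sqrtr x c : 0 <= x -> x ^+ 2 <= c -> x <= Num.sqrt c.
Proof.
by move=> x0 xc; rewrite -(ger0_norm x0) -sqrtr_sqr ler_sqrt // (le_trans _ xc) ?sqr_ge0.
Qed.

Lemma exprn_ge1Dmul y n : 0 <= y -> 1 + n%:R * y <= (1 + y) ^+ n.
Proof.
move=> y0; elim: n => [|n IHn]; first by rewrite mul0r addr0 expr0.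
have ny2 : 0 <= n%:R * y * y by rewrite !mulr_ge0.
rewrite exprS -natr1; apply: le_trans (ler_wpM2l _ IHn); lra.
Qed.

Lemma sqr_sum_le_size (I : Type) (r : seq I) (f : I -> R) :
  (\sum_(i <- r) f i) ^+ 2 <= (size r)%:R * \sum_(i <- r) f i ^+ 2.
Proof.
elim: r => [|i r IHr]; first by rewrite !big_nil expr0n mulr0.
rewrite !big_cons /= -natr1.
set s := \sum_(j <- r) f j; set s2 := \sum_(j <- r) f j ^+ 2; set m := (size r)%:R.
have m0 : 0 <= m by [].
have s20 : 0 <= s2 by rewrite sumr_ge0 // => j _; apply: sqr_ge0.
have := sqr_ge0 (m * f i - s); move: IHr; rewrite -/s -/s2 -/m => IHr sq0.
have [m_gt0|m_le0] := ltrP 0 m; first by rewrite -(@ler_pM2l _ m) //; nra.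
have m_eq0 : m = 0 by apply/eqP; rewrite eq_le m_le0 m0.
have s_eq0 : s = 0.
  by apply/eqP; rewrite -sqrf_eq0 eq_le sqr_ge0 andbT; rewrite m_eq0 mul0r in IHr.
by rewrite s_eq0 m_eq0 addr0 add0r mul1r lerDl.
Qed.

Lemma ln1D_ge y : 0 <= y -> y / (1 + y) <= ln (1 + y).
Proof.
move=> y0; have y1 : 0 < 1 + y by lra.
have := @le_ln1Dx R ((1 + y)^-1 - 1).
have -> : 1 + ((1 + y)^-1 - 1) = (1 + y)^-1 by ring.
rewrite lnV ?posrE // ltrBrDr addNr invr_gt0 => /(_ y1).
have -> : (1 + y)^-1 - 1 = - (y / (1 + y)) by field; lra.
by rewrite lerN2.
Qed.

Lemma expR1_le3 : expR (1 : R) <= 3.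
Proof.
(* [expR (-1/6) >= 5/6] from [1 + x <= expR x], and [(6/5)^6 <= 3] *)
have e6 : expR (6%:R^-1 : R) <= 6 / 5.
  have := @expR_ge1Dx R (- 6%:R^-1); have := expR_gt0 (- (6%:R^-1 : R)) => e_gt0 e_ge.
  rewrite -[X in expR X]opprK expRN -[X in X <= _]mul1r ler_pdivrMr //; lra.
have -> : (1 : R) = 6%:R * 6%:R^-1 by rewrite mulfV // pnatr_eq0.
rewrite expRM_natl; apply: (@le_trans _ _ ((6 / 5) ^+ 6)).
  by apply: lerXn2r; rewrite ?nnegrE ?expR_ge0 //; lra.
by rewrite !exprS expr0; lra.
Qed.

Lemma natr_le_ln n x : 3 ^+ n <= x -> n%:R <= ln x.
Proof.
move=> x_ge; have ex : expR (n%:R : R) <= x.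
  rewrite -[n%:R]mulr1 expRM_natl; apply: le_trans x_ge.
  by apply: lerXn2r; rewrite ?nnegrE ?expR_ge0 ?expR1_le3.
by rewrite -[n%:R]expRK; apply: ln_le_ln ex; apply: expR_gt0.
Qed.

Lemma half_le_ln x : 2 <= x -> 1 / 2 <= ln x.
Proof.
move=> x_ge; have ex : expR (1 / 2 : R) <= 2.
  have : expR (1 / 2 : R) ^+ 2 <= 2 ^+ 2.
    rewrite -expRM_natl (_ : 2%:R * (1 / 2) = 1 :> R); last by field.
    by apply: le_trans expR1_le3 _; rewrite expr2; lra.
  by rewrite ler_pXn2r // ?nnegrE ?expR_ge0 //; lra.
by rewrite -[1 / 2]expRK; apply: ln_le_ln (le_trans ex x_ge); apply: expR_gt0.
Qed.

(* With [H <= b], the truncation at [H] only happens once [b x] is of order [H],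
   where [ln (1 + x^2)] is already bounded below. *)
Lemma sqr_min_le_ln1D x b H : 0 <= x -> 0 < H -> H <= b ->
  (Num.min (3 * b * x) H) ^+ 2 <= 10 * b ^+ 2 * ln (1 + x ^+ 2).
Proof.
move=> x0 H0 Hb; have b0 : 0 < b by apply: lt_le_trans Hb.
have b2 : 0 < b ^+ 2 by apply: exprn_gt0.
have -> : 10 * b ^+ 2 * ln (1 + x ^+ 2) = b ^+ 2 * (10 * ln (1 + x ^+ 2)) by ring.
have key c : 0 <= c -> c <= 1 / 9 -> 9 * c <= 10 * ln (1 + c).
  move=> c0 c9; apply: le_trans (_ : 10 * (c / (1 + c)) <= _).
    by rewrite mulrA ler_pdivlMr; nra.
  by rewrite ler_pM2l //; apply: ln1D_ge.
have [bxH|Hbx] := leP (3 * b * x) H.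
  have x3 : x <= 1 / 3.
    rewrite ler_pdivlMr //; have : 3 * b * x <= b by apply: le_trans Hb.
    by rewrite -[X in _ <= X]mulr1 -mulrA mulrCA ler_pM2l // mulrC; lra.
  have -> : (3 * b * x) ^+ 2 = b ^+ 2 * (9 * x ^+ 2) by ring.
  rewrite ler_pM2l //; apply: key; first exact: sqr_ge0.
  have -> : (1 / 9 : R) = (1 / 3) ^+ 2 by rewrite expr2; field.
  by apply: lerXn2r; rewrite ?nnegrE //; lra.
set c := H ^+ 2 / (9 * b ^+ 2).
have c0 : 0 < c by rewrite /c divr_gt0 ?mulr_gt0 ?exprn_gt0.
have c9 : c <= 1 / 9.
  rewrite /c ler_pdivrMr ?mulr_gt0 //.
  have : H ^+ 2 <= b ^+ 2 by apply: lerXn2r; rewrite ?nnegrE //; lra.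
  lra.
have cx : c <= x ^+ 2.
  rewrite /c ler_pdivrMr ?mulr_gt0 //.
  have : H ^+ 2 <= (3 * b * x) ^+ 2 by apply: lerXn2r; rewrite ?nnegrE ?ltW //; nra.
  by rewrite !exprMn; lra.
have -> : H ^+ 2 = b ^+ 2 * (9 * c) by rewrite /c; field; rewrite gt_eqF.
rewrite ler_pM2l //; apply: le_trans (key _ (ltW c0) c9) _.
by rewrite ler_pM2l //; apply: ln_le_ln; lra.
Qed.

(* Bootstrapping: each lower bound on [Kr] improves the bounds on the two logarithms. *)
Lemma log_bounds_dichotomy a2 q2 Kr : 1 <= Kr ->
  ln (4 * Kr) <= a2 -> ln (1 + Kr) <= q2 ->
  (6 <= a2 /\ 4 <= q2) \/ Kr <= 36 * a2 * q2.
Proof.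
move=> K1 ha hq; have [|hK] := leP Kr (36 * a2 * q2); [by right | left].
have pow3 n : (3 : R) ^+ n = (3 ^ n)%N%:R by rewrite natrX.
have a1 : 1 <= a2 by apply: le_trans ha; apply: (@natr_le_ln 1); rewrite pow3 /=; lra.
have q1 : 1 / 2 <= q2 by apply: le_trans hq; apply: half_le_ln; lra.
have K18 : 18 < Kr by nra.
have a3 : 3 <= a2 by apply: le_trans ha; apply: (@natr_le_ln 3); rewrite pow3 /=; lra.
have q2' : 2 <= q2 by apply: le_trans hq; apply: (@natr_le_ln 2); rewrite pow3 /=; lra.
have K216 : 216 < Kr by nra.
split; first by apply: le_trans ha; apply: (@natr_le_ln 6); rewrite pow3 /=; lra.
by apply: le_trans hq; apply: (@natr_le_ln 4); rewrite pow3 /=; lra.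
Qed.

Lemma sqrt_coef_le a q : 0 <= a -> 0 <= q -> 6 <= a ^+ 2 -> 4 <= q ^+ 2 ->
  (a + 1) * Num.sqrt 10 * q + Num.sqrt 2 * a <= 6 * a * q.
Proof.
move=> a0 q0 a6 q4.
have a244 : 244 / 100 <= a by nra.
have q2 : 2 <= q by nra.
have s10 : Num.sqrt (10 : R) <= 317 / 100 by apply: sqrtr_le; rewrite ?expr2; lra.
have s2 : Num.sqrt (2 : R) <= 142 / 100 by apply: sqrtr_le; rewrite ?expr2; lra.
have s10_ge0 : 0 <= Num.sqrt (10 : R) := sqrtr_ge0 _.
have s2_ge0 : 0 <= Num.sqrt (2 : R) := sqrtr_ge0 _.
have : Num.sqrt 10 * q <= 317 / 100 * q by nra.
have : Num.sqrt 2 * a <= 142 / 100 * a by nra.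
nra.
Qed.

Lemma le_rate_of_sum_le V Hr Kr a q : 1 <= Hr -> 1 <= Kr -> 0 <= a -> 0 <= q ->
  ln (4 * Kr) <= a ^+ 2 -> ln (1 + Kr) <= q ^+ 2 -> V <= Hr ->
  Kr * V <= Hr * (a + 1) * Num.sqrt (10 * Kr) * q + Num.sqrt 2 * Hr * a * Num.sqrt Kr ->
  V <= 6 * Hr * a * q / Num.sqrt Kr.
Proof.
move=> H1 K1 a0 q0 ha hq VH hV; set s := Num.sqrt Kr.
have s0 : 0 < s by rewrite /s sqrtr_gt0; lra.
have eK : Kr = s ^+ 2 by rewrite /s sqr_sqrtr //; lra.
rewrite ler_pdivlMr // mulrC.
have [[a6 q4]|Ksmall] := log_bounds_dichotomy K1 ha hq; last first.
  apply: le_trans (_ : s * Hr <= _); first by rewrite ler_wpM2l // ltW.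
  have -> : 6 * Hr * a * q = Hr * (6 * a * q) by ring.
  rewrite mulrC ler_wpM2l //; first lra.
  by apply: sqrtr_le; rewrite ?mulr_ge0 //; nra.
have coef := sqrt_coef_le a0 q0 a6 q4.
rewrite sqrtrM ?ler0n // -/s eK in hV.
have : s * (s * V) <= s * (Hr * ((a + 1) * Num.sqrt 10 * q + Num.sqrt 2 * a)).
  have -> : s * (s * V) = s ^+ 2 * V by ring.
  have -> : s * (Hr * ((a + 1) * Num.sqrt 10 * q + Num.sqrt 2 * a)) =
    Hr * (a + 1) * (Num.sqrt 10 * s) * q + Num.sqrt 2 * Hr * a * s by ring.
  exact: hV.
rewrite ler_pM2l // => sV; apply: le_trans sV _.
have -> : 6 * Hr * a * q = Hr * (6 * a * q) by ring.
by rewrite ler_wpM2l //; lra.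
Qed.

End RealInequalities.

Lemma down_ind H (Q : nat -> Prop) : Q H.+1 ->
  (forall h, (1 <= h <= H)%N -> Q h.+1 -> Q h) -> forall h, (1 <= h <= H.+1)%N -> Q h.
Proof.
move=> QH Qstep; suff QHm m : (m <= H)%N -> Q (H.+1 - m)%N.
  by move=> h hH; rewrite -(@subKn h H.+1); [apply: QHm | ]; lia.
elim: m => [|m IHm] mH; first by rewrite subn0.
rewrite subSS; apply: Qstep; first lia.
by rewrite -subSn; [apply: IHm | ]; lia.
Qed.

Section BackwardRecursion.
Variables (R : realType) (S A : finType).

Lemma le_maxA (a0 : A) (f : A -> R) a : f a <= Defs.maxA a0 f.
Proof. rewrite /Defs.maxA; exact: le_bigmax. Qed.

Lemma maxA_le (a0 : A) (f : A -> R) c : (forall a, f a <= c) -> Defs.maxA a0 f <= c.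
Proof. by move=> fc; rewrite /Defs.maxA; apply: bigmax_le. Qed.

Lemma le_maxA2 (a0 : A) (f g : A -> R) :
  (forall a, f a <= g a) -> Defs.maxA a0 f <= Defs.maxA a0 g.
Proof. by move=> fg; apply: maxA_le => a; apply: le_trans (fg a) (le_maxA _ _ _). Qed.

Lemma maxA_eq (a0 : A) (f : A -> R) a : (forall b, f b <= f a) -> Defs.maxA a0 f = f a.
Proof. by move=> fa; apply/eqP; rewrite eq_le maxA_le // le_maxA. Qed.

Lemma bwdV_step H (step : nat -> (S -> R) -> S -> R) h : (1 <= h <= H)%N ->
  bwdV H step h = step h (bwdV H step h.+1).
Proof.
move=> /andP [h1 hH]; rewrite /bwdV h1 hH /= subSn //= subKn //.
by case: ltnP => [hH'|Hh]; [rewrite subSS | rewrite (@anti_leq h H) ?hH // subnn].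
Qed.

Lemma bwdV_end H (step : nat -> (S -> R) -> S -> R) : bwdV H step H.+1 =1 fun=> 0.
Proof. by move=> s; rewrite /bwdV ltnn andbF. Qed.

Lemma Vstar_step a0 H (P : nat -> S -> A -> S -> R) Rw h s : (1 <= h <= H)%N ->
  Vstar a0 H P Rw h s =
  Defs.maxA a0 (fun a => Num.min (Rw h s a + \sum_s' P h s a s' * Vstar a0 H P Rw h.+1 s') H%:R).
Proof. by move=> hH; rewrite /Vstar bwdV_step. Qed.

Lemma Vstar_end a0 H (P : nat -> S -> A -> S -> R) Rw s : Vstar a0 H P Rw H.+1 s = 0.
Proof. exact: bwdV_end. Qed.

End BackwardRecursion.

Section OptimalValue.
Variables (R : realType) (S A : finType) (a0 : A) (H : nat) (P : nat -> S -> A -> S -> R).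
Hypothesis P_ge0 : forall h s a s', (1 <= h <= H)%N -> 0 <= P h s a s'.

Lemma Vstar_ge0_le (Rw : nat -> S -> A -> R) :
  (forall h s a, (1 <= h <= H)%N -> 0 <= Rw h s a) ->
  forall h, (1 <= h <= H.+1)%N -> forall s, 0 <= Vstar a0 H P Rw h s <= H%:R.
Proof.
move=> Rw_ge0; apply: down_ind => [s|h hH IHh s]; first by rewrite Vstar_end lexx ler0n.
rewrite Vstar_step //; apply/andP; split; last by apply: maxA_le => a; rewrite ge_min lexx orbT.
apply: le_trans (le_maxA _ _ a0); rewrite le_min ler0n andbT addr_ge0 ?Rw_ge0 //.
by apply: sumr_ge0 => s' _; rewrite mulr_ge0 ?P_ge0 //; case/andP: (IHh s').
Qed.

Lemma le_Vstar (R1 R2 : nat -> S -> A -> R) :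
  (forall h s a, (1 <= h <= H)%N -> R1 h s a <= R2 h s a) ->
  forall h, (1 <= h <= H.+1)%N -> forall s, Vstar a0 H P R1 h s <= Vstar a0 H P R2 h s.
Proof.
move=> R12; apply: down_ind => [s|h hH IHh s]; first by rewrite !Vstar_end.
rewrite !Vstar_step //; apply: le_maxA2 => a; apply: le_min2 => //.
by apply: lerD; [apply: R12 | apply: ler_sum => s' _; rewrite ler_wpM2l ?P_ge0].
Qed.

End OptimalValue.

Section WeightedNorm.
Variable R : realType.

Lemma wnorm1 n (x : 'cV[R]_n) : wnorm 1%:M x = Num.sqrt (vdot x x).
Proof. by rewrite /wnorm mulmx1. Qed.

Lemma vdot_le_wnorm n (M : 'M[R]_n) y z : M^T = M -> M \in unitmx -> psdmx M ->
  `|vdot y z| <= wnorm M y * wnorm (invmx M) z.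
Proof.
move=> sM uM psdM.
change (`|vdot y z| <= Num.sqrt (qform M y) * Num.sqrt (qform (invmx M) z)).
rewrite -sqrtrM // -sqrtr_sqr ler_sqrt ?mulr_ge0 ?qform_invmx_ge0 //.
exact: vdot_sqr_le.
Qed.

End WeightedNorm.

Section Algorithm1.
Variables (R : realType) (S A : finType) (a0 : A) (d H K : nat) (B delta : R)
  (phi : S -> A -> S -> 'cV[R]_d) (theta : nat -> 'cV[R]_d)
  (P : nat -> S -> A -> S -> R) (s1 : S)
  (Vt : nat -> nat -> S -> A -> S -> R) (pi : nat -> nat -> S -> A)
  (st : nat -> nat -> S) (act : nat -> nat -> A).
Hypotheses (d_gt0 : (0 < d)%N) (H_gt0 : (0 < H)%N) (K_gt0 : (0 < K)%N) (B_gt0 : 0 < B)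
  (delta01 : 0 < delta < 1).
Hypothesis P_ge0 : forall h s a s', (1 <= h <= H)%N -> 0 <= P h s a s'.
Hypothesis P_sum1 : forall h s a, (1 <= h <= H)%N -> \sum_s' P h s a s' = 1.
Hypothesis phiV_le1 : forall s a (V : S -> R), (forall s', 0 <= V s' <= 1) ->
  wnorm 1%:M (phiV phi s a V) <= 1.
Hypothesis theta_le : forall h, (1 <= h <= H)%N -> wnorm 1%:M (theta h) <= B.
Hypothesis P_linear : forall h s a s', (1 <= h <= H)%N ->
  P h s a s' = ((theta h)^T *m phi s a s') ord0 ord0.
Hypothesis Vt_bounds : forall k h s a, (1 <= k <= K)%N -> (1 <= h <= H)%N ->
  forall s', 0 <= Vt k h s a s' <= H%:R.
Hypothesis Vt_argmax : forall k h s a, (1 <= k <= K)%N -> (1 <= h <= H)%N ->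
  forall V : S -> R, (forall s', 0 <= V s' <= H%:R) ->
  wnorm (invmx (Lam phi B Vt st act k h)) (phiV phi s a V)
  <= wnorm (invmx (Lam phi B Vt st act k h)) (featV phi Vt k h s a).
Hypothesis pi_greedy : forall k h s a, (1 <= k <= K)%N -> (1 <= h <= H)%N ->
  Qk phi B delta H K Vt st act a0 k h s a <= Qk phi B delta H K Vt st act a0 k h s (pi k h s).
Hypothesis st_init : forall k, (1 <= k <= K)%N -> st k 1%N = s1.
Hypothesis act_pi : forall k h, (1 <= k <= K)%N -> (1 <= h <= H)%N -> act k h = pi k h (st k h).
Hypothesis theta_conf : forall k h, (1 <= k <= K)%N -> (1 <= h <= H)%N ->
  wnorm (Lam phi B Vt st act k h) (thetahat phi B Vt st act k h - theta h)
  <= betaB d H K B delta.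
Hypothesis martingale_le :
  \sum_(1 <= k < K.+1) \sum_(1 <= h < H.+1)
     (\sum_s' P h (st k h) (act k h) s' * Valg phi B delta H K Vt st act a0 k h.+1 s'
      - Valg phi B delta H K Vt st act a0 k h.+1 (st k h.+1))
  <= Num.sqrt (2 * H%:R ^+ 3 * K%:R * ln (4 / delta)).

Local Notation lam := (lamB B).
Local Notation beta := (betaB d H K B delta).
Local Notation Lk := (Lam phi B Vt st act).
Local Notation uk := (bonus phi B delta H K Vt st act).
Local Notation Vk := (Valg phi B delta H K Vt st act a0).
Local Notation Vuk k := (Vstar a0 H P (uk k)).
Local Notation feat k h := (featV phi Vt k h (st k h) (act k h)).
Local Notation argL := (4 * H%:R ^+ 3 * K%:R * lam^-1 * delta^-1).
Local Notation logL := (ln argL).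
Local Notation logD := (ln (1 + K%:R * H%:R ^+ 2 * B ^+ 2 / d%:R)).

Lemma lam_gt0 : 0 < lam.
Proof. by rewrite /lamB invr_gt0 exprn_gt0. Qed.

Lemma Lk_sym k h : (Lk k h)^T = Lk k h.
Proof. by rewrite /Lam linearD /= tr_scalar_mx sum_outer_sym. Qed.

Lemma Lk_ge_scalar k h : ge_scalar_mx lam (Lk k h).
Proof. by move=> x; rewrite /Lam qform_add qform_scalar lerDr psdmx_sum_outer. Qed.

Lemma Lk_unit k h : Lk k h \in unitmx.
Proof. exact: ge_scalar_mx_unit lam_gt0 (Lk_ge_scalar k h). Qed.

Lemma Lk_psd k h : psdmx (Lk k h).
Proof. exact: ge_scalar_mx_psd (ltW lam_gt0) (Lk_ge_scalar k h). Qed.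

Lemma qform_invLk_ge0 k h z : 0 <= qform (invmx (Lk k h)) z.
Proof. exact: qform_invmx_ge0 (Lk_sym k h) (Lk_unit k h) (Lk_psd k h). Qed.

Lemma Lk_split k k' h : (1 <= k <= k')%N ->
  Lk k' h = Lk k h + \sum_(k <= t < k') feat t h *m (feat t h)^T.
Proof. by move=> /andP [k1 kk']; rewrite /Lam (big_cat_nat k1 kk') /= addrAC. Qed.

Lemma Lk_succ k h : (1 <= k)%N -> Lk k.+1 h = Lk k h + feat k h *m (feat k h)^T.
Proof. by move=> k1; rewrite /Lam big_nat_recr //= addrAC. Qed.

Lemma sum_P_phiV h s a (V : S -> R) : (1 <= h <= H)%N ->
  \sum_s' P h s a s' * V s' = ((theta h)^T *m phiV phi s a V) ord0 ord0.
Proof.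
move=> hH; rewrite /phiV mulmx_sumr summxE; apply: eq_bigr => s' _.
by rewrite -scalemxAr mxE P_linear // mulrC.
Qed.

(* [sum_s' P_1(s'|s1,a0) = 1 = theta_1^T phiV 1] and Cauchy-Schwarz give [1 <= B]. *)
Lemma B_ge1 : 1 <= B.
Proof.
have h1 : (1 <= 1 <= H)%N by rewrite leqnn H_gt0.
set one := phiV phi s1 a0 (fun=> 1).
have e1 : vdot (theta 1%N) one = 1.
  by rewrite -(P_sum1 s1 a0 h1) /vdot -sum_P_phiV //; apply: eq_bigr => s' _; rewrite mulr1.
have := vdot_le_wnorm (theta 1%N) one (tr_scalar_mx _ _) (unitmx1 _ _) (@psdmx1 _ d).
rewrite invmx1 e1 normr1 => /le_trans; apply.
have := @phiV_le1 s1 a0 (fun=> 1) (fun=> ltac:(by rewrite ler01 lexx)).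
have := theta_le h1.
have := sqrtr_ge0 (qform 1%:M one); have := sqrtr_ge0 (qform 1%:M (theta 1%N)).
rewrite /wnorm; nra.
Qed.

(* [Vt / H] takes values in [0, 1], where [phiV] has norm at most 1 *)
Lemma featV_norm k h s a : (1 <= k <= K)%N -> (1 <= h <= H)%N ->
  vdot (featV phi Vt k h s a) (featV phi Vt k h s a) <= H%:R ^+ 2.
Proof.
move=> kK hH; have H0 : 0 < H%:R :> R by rewrite ltr0n.
set W := fun s' => Vt k h s a s' / H%:R.
have eV : featV phi Vt k h s a = H%:R *: phiV phi s a W.
  rewrite /featV /phiV scaler_sumr; apply: eq_bigr => s' _.
  by rewrite scalerA /W mulrC divfK // gt_eqF.
have W01 s' : 0 <= W s' <= 1.
  have /andP [V0 VH] := Vt_bounds s a kK hH s'.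
  by rewrite divr_ge0 ?ler0n //= ler_pdivrMr // mul1r.
have W1 : vdot (phiV phi s a W) (phiV phi s a W) <= 1.
  by rewrite -(ler_sqrt _ ler01) sqrtr1 -wnorm1 phiV_le1.
by rewrite eV -!bform1 bformZl bformZr mulrA -expr2 bform1 ler_piMr ?sqr_ge0.
Qed.

Lemma beta_ge0 : 0 <= beta.
Proof. by rewrite /betaB addr_ge0 ?mulr_ge0 ?sqrtr_ge0 // ltW. Qed.

Lemma uk_ge0 k h s a : 0 <= uk k h s a.
Proof. by rewrite /bonus mulr_ge0 ?beta_ge0 ?sqrtr_ge0. Qed.

Lemma model_err_le_uk k h s a (V : S -> R) : (1 <= k <= K)%N -> (1 <= h <= H)%N ->
  (forall s', 0 <= V s' <= H%:R) ->
  `|((thetahat phi B Vt st act k h)^T *m phiV phi s a V) ord0 ord0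
    - ((theta h)^T *m phiV phi s a V) ord0 ord0| <= uk k h s a.
Proof.
move=> kK hH VH; have -> : forall X Y : 'M[R]_1, X ord0 ord0 - Y ord0 ord0 = (X - Y) 0 0.
  by move=> X Y; rewrite !mxE.
rewrite -mulmxBl -linearB /=.
apply: le_trans (vdot_le_wnorm _ _ (Lk_sym k h) (Lk_unit k h) (Lk_psd k h)) _.
by rewrite /bonus ler_pM ?sqrtr_ge0 ?theta_conf ?Vt_argmax.
Qed.

Lemma Vk_step k h s : (1 <= h <= H)%N ->
  Vk k h s = Defs.maxA a0 (Qalg phi B delta H K Vt st act k h (Vk k h.+1) s).
Proof. by move=> hH; rewrite /Valg bwdV_step. Qed.

Lemma Vk_end k s : Vk k H.+1 s = 0.
Proof. exact: bwdV_end. Qed.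

Lemma Vuk_ge0_le k h s : (1 <= h <= H.+1)%N -> 0 <= Vuk k h s <= H%:R.
Proof. by move=> hH; apply: Vstar_ge0_le => // *; apply: uk_ge0. Qed.

(* Optimism: the bonus absorbs the model error. *)
Lemma optimism k : (1 <= k <= K)%N -> forall h, (1 <= h <= H.+1)%N -> forall s,
  Vuk k h s <= Vk k h s /\ 0 <= Vk k h s <= H%:R.
Proof.
move=> kK; apply: down_ind => [s|h hH IHh s]; first by rewrite Vstar_end Vk_end lexx ler0n.
have VkH s' : 0 <= Vk k h.+1 s' <= H%:R by case: (IHh s').
have VukVk : Vuk k h s <= Vk k h s.
  rewrite Vstar_step // Vk_step //; apply: le_maxA2 => a; apply: le_min2 => //.
  have := model_err_le_uk s a kK hH VkH; rewrite ler_norml -sum_P_phiV // => /andP [err _].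
  have : \sum_s' P h s a s' * Vuk k h.+1 s' <= \sum_s' P h s a s' * Vk k h.+1 s'.
    by apply: ler_sum => s' _; rewrite ler_wpM2l ?P_ge0 //; case: (IHh s').
  lra.
split=> //; rewrite (le_trans _ VukVk) /=; last by case/andP: (@Vuk_ge0_le k h s ltac:(lia)).
by rewrite Vk_step //; apply: maxA_le => a; rewrite ge_min lexx orbT.
Qed.

(* [Lk K h] dominates [Lk k h], and the maximizer [Vt] of episode [k] is feasible in episode [K]. *)
Lemma uK_le_uk k h s a : (1 <= k <= K)%N -> (1 <= h <= H)%N -> uk K h s a <= uk k h s a.
Proof.
move=> kK hH; have KK : (1 <= K <= K)%N by rewrite K_gt0 leqnn.
rewrite /bonus ler_wpM2l ?beta_ge0 //.
apply: le_trans (Vt_argmax s a kK hH (Vt_bounds s a KK hH)).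
rewrite ler_sqrt; last exact: qform_invLk_ge0.
rewrite (Lk_split h kK); apply: qform_invmxD_le.
- exact: Lk_sym.
- exact: sum_outer_sym.
- exact: Lk_unit.
- by rewrite -Lk_split // Lk_unit.
- exact: Lk_psd.
- exact: psdmx_sum_outer.
Qed.

Lemma VuK_le_Vuk k : (1 <= k <= K)%N -> Vuk K 1 s1 <= Vuk k 1 s1.
Proof. by move=> kK; apply: le_Vstar => // h s a hH; apply: uK_le_uk. Qed.

(* On the trajectory the greedy action is played, so [Vk] equals [Qk]; its excess over
   the true expectation is at most two bonuses plus one model error. *)
Lemma Vk_sub_le k h : (1 <= k <= K)%N -> (1 <= h <= H)%N ->
  Vk k h (st k h) - \sum_s' P h (st k h) (act k h) s' * Vk k h.+1 s'
  <= Num.min (3 * uk k h (st k h) (act k h)) H%:R.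
Proof.
move=> kK hH; have VkH s' : 0 <= Vk k h.+1 s' <= H%:R by case: (optimism kK (h := h.+1) ltac:(lia) s').
have -> : Vk k h (st k h) = Qk phi B delta H K Vt st act a0 k h (st k h) (act k h).
  by rewrite Vk_step // act_pi //; apply: maxA_eq => b; apply: pi_greedy.
rewrite /Qk /Qalg; set s := st k h; set a := act k h.
have := model_err_le_uk s a kK hH VkH; rewrite ler_norml -sum_P_phiV // => /andP [_ err].
have PV0 : 0 <= \sum_s' P h s a s' * Vk k h.+1 s'.
  by apply: sumr_ge0 => s' _; rewrite mulr_ge0 ?P_ge0 //; case/andP: (VkH s').
set X := (_ *m phiV phi s a (Vk k h.+1)) ord0 ord0 in err *.
have : Num.min (X + uk k h s a + uk k h s a) H%:R <= X + uk k h s a + uk k h s a.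
  by rewrite ge_min lexx.
have : Num.min (X + uk k h s a + uk k h s a) H%:R <= H%:R by rewrite ge_min lexx orbT.
by rewrite le_min; lra.
Qed.

Lemma Vk1_telescope k : (1 <= k <= K)%N ->
  Vk k 1 s1 = \sum_(1 <= h < H.+1) (Vk k h (st k h) - Vk k h.+1 (st k h.+1)).
Proof.
move=> kK; have := @telescope_sumr _ 1 H.+1 (fun h => - Vk k h (st k h)) isT.
rewrite /= Vk_end st_init // oppr0 add0r opprK => <-.
by apply: eq_bigr => h _; rewrite opprK addrC.
Qed.

Local Notation w k h := (qform (invmx (Lk k h)) (feat k h)).

Lemma det_Lk h n : (1 <= n)%N -> \det (Lk n h) = lam ^+ d * \prod_(1 <= k < n) (1 + w k h).
Proof.
elim: n => [//|n IHn] _; have [->|n_gt0] := posnP n.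
  by rewrite big_geq // mulr1 /Lam big_geq // add0r det_scalar.
by rewrite big_nat_recr //= mulrA -IHn // Lk_succ // det_add_outer ?Lk_unit.
Qed.

Lemma mxtrace_LK h : (1 <= h <= H)%N -> \tr (Lk K.+1 h) <= K%:R * H%:R ^+ 2 + lam * d%:R.
Proof.
move=> hH; rewrite /Lam mxtraceD mxtrace_scalar raddf_sum /= -[lam *+ d]mulr_natr lerD2r.
have -> : K%:R * H%:R ^+ 2 = \sum_(1 <= k < K.+1) (H%:R ^+ 2 : R).
  by rewrite sumr_const_nat subn1 mulr_natl.
rewrite big_nat [X in _ <= X]big_nat; apply: ler_sum => k /andP [k1 kK].
by rewrite mxtrace_mulC /mxtrace big_ord1 featV_norm // k1 -ltnS.
Qed.

(* Elliptical potential: [det (Lk K.+1 h) = lam^d prod_k (1 + w k h)] is bounded through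
   AM-GM by the trace. *)
Lemma sum_ln1D_w_le h : (1 <= h <= H)%N -> \sum_(1 <= k < K.+1) ln (1 + w k h) <= d%:R * logD.
Proof.
move=> hH; have w1 k : 0 < 1 + w k h by have := qform_invLk_ge0 k h (feat k h); lra.
have d0 : 0 < d%:R :> R by rewrite ltr0n.
set y := K%:R * H%:R ^+ 2 * B ^+ 2 / d%:R.
have y0 : 0 <= y by apply: divr_ge0 => //; rewrite !mulr_ge0 // ltW.
rewrite -ln_prod // mulr_natl -lnXn; last lra.
apply: ln_le_ln; first exact: prodr_gt0.
have tr_le : \tr (Lk K.+1 h) / d%:R <= (1 + y) * lam.
  rewrite ler_pdivrMr //.
  have -> : (1 + y) * lam * d%:R = K%:R * H%:R ^+ 2 + lam * d%:R.
    by rewrite /y /lamB; field; rewrite ?gt_eqF ?exprn_gt0.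
  exact: mxtrace_LK.
have tr_ge0 : 0 <= \tr (Lk K.+1 h) / d%:R.
  rewrite divr_ge0 // /mxtrace sumr_ge0 // => i _.
  exact: le_trans (ltW lam_gt0) (ge_scalar_mx_diag i (Lk_ge_scalar _ _)).
have := det_le_mxtrace d_gt0 lam_gt0 (Lk_sym K.+1 h) (Lk_ge_scalar K.+1 h).
rewrite det_Lk // => det_le.
have tr_pow : (\tr (Lk K.+1 h) / d%:R) ^+ d <= ((1 + y) * lam) ^+ d.
  by apply: lerXn2r; rewrite ?nnegrE // mulr_ge0 ?(ltW lam_gt0) //; lra.
have := le_trans det_le tr_pow.
by rewrite exprMn mulrC ler_pM2r // exprn_gt0 // lam_gt0.
Qed.

Lemma argL_ge : 4 * K%:R <= argL /\ 4 / delta <= argL.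
Proof.
have H1 : 1 <= H%:R ^+ 3 :> R by rewrite exprn_ege1 // ler1n.
have K1 : 1 <= K%:R :> R by rewrite ler1n.
have B1 : 1 <= B ^+ 2 by rewrite exprn_ege1 // B_ge1.
have [delta0 delta1] := andP delta01.
have idelta1 : 1 <= delta^-1 by rewrite invf_ge1 // ltW.
split.
  have -> : argL = (4 * K%:R) * (H%:R ^+ 3 * B ^+ 2 * delta^-1) by rewrite /lamB invrK; ring.
  by apply: ler_peMr; [lra | apply: mulr_ege1 => //; apply: mulr_ege1].
have -> : argL = (4 / delta) * (H%:R ^+ 3 * K%:R * B ^+ 2) by rewrite /lamB invrK; ring.
by apply: ler_peMr; [rewrite divr_ge0 ?ltW | apply: mulr_ege1 => //; apply: mulr_ege1].
Qed.

Lemma logL_ge1 : 1 <= logL.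
Proof.
have K1 : 1 <= K%:R :> R by rewrite ler1n.
by apply: (@natr_le_ln _ 1); apply: le_trans argL_ge.1; rewrite expr1; lra.
Qed.

Lemma beta_eq : beta = H%:R * Num.sqrt (d%:R * logL) + 1.
Proof.
rewrite /betaB /lamB -exprVn sqrtr_sqr ger0_norm ?invr_ge0 ?ltW //.
by rewrite mulVf // gt_eqF.
Qed.

Lemma H_le_beta : H%:R <= beta.
Proof.
have dL1 : 1 <= d%:R * logL by rewrite mulr_ege1 ?ler1n ?logL_ge1.
have : 1 <= Num.sqrt (d%:R * logL) by rewrite -[X in X <= _]sqrtr1 ler_sqrt //; lra.
by rewrite beta_eq; have : 0 <= H%:R :> R by []; nra.
Qed.

Lemma logD_ge0 : 0 <= logD.
Proof. by rewrite ln_ge0 // lerDl divr_ge0 // !mulr_ge0 // ltW. Qed.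

(* Cauchy-Schwarz over the [K] episodes, then the elliptical potential bound. *)
Lemma sum_min_uk_le h : (1 <= h <= H)%N ->
  \sum_(1 <= k < K.+1) Num.min (3 * uk k h (st k h) (act k h)) H%:R
  <= beta * Num.sqrt (10 * K%:R) * Num.sqrt (d%:R * logD).
Proof.
move=> hH; have beta0 := beta_ge0.
set m := fun k => Num.min (3 * uk k h (st k h) (act k h)) H%:R.
have m_ge0 k : 0 <= m k by rewrite le_min ler0n andbT mulr_ge0 ?uk_ge0.
have m2 k : m k ^+ 2 <= 10 * beta ^+ 2 * ln (1 + w k h).
  rewrite /m /bonus mulrA -[w k h]sqr_sqrtr ?qform_invLk_ge0 //.
  by apply: sqr_min_le_ln1D; rewrite ?sqrtr_ge0 ?ltr0n ?H_le_beta.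
have sum_m2 : \sum_(1 <= k < K.+1) m k ^+ 2 <= 10 * beta ^+ 2 * (d%:R * logD).
  apply: le_trans (ler_sum _ (fun k _ => m2 k)) _; rewrite -mulr_sumr.
  by apply: ler_wpM2l; [rewrite mulr_ge0 ?sqr_ge0 | exact: sum_ln1D_w_le].
have sum_sq := sqr_sum_le_size (index_iota 1 K.+1) m; rewrite size_iota subn1 /= in sum_sq.
have -> : beta * Num.sqrt (10 * K%:R) * Num.sqrt (d%:R * logD) =
    Num.sqrt (beta ^+ 2 * (10 * K%:R) * (d%:R * logD)).
  rewrite (@sqrtrM _ (beta ^+ 2 * _)) ?mulr_ge0 ?sqr_ge0 //.
  by rewrite (@sqrtrM _ (beta ^+ 2)) ?sqr_ge0 // sqrtr_sqr ger0_norm.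
apply: le_sqrtr; first by apply: sumr_ge0 => k _; apply: m_ge0.
apply: le_trans sum_sq _.
have -> : beta ^+ 2 * (10 * K%:R) * (d%:R * logD) = K%:R * (10 * beta ^+ 2 * (d%:R * logD)).
  by ring.
by rewrite ler_wpM2l.
Qed.

Lemma K_mul_VuK_le : K%:R * Vuk K 1 s1 <=
  H%:R * (beta * Num.sqrt (10 * K%:R) * Num.sqrt (d%:R * logD))
  + Num.sqrt (2 * H%:R ^+ 3 * K%:R * ln (4 / delta)).
Proof.
set m := fun k h => Num.min (3 * uk k h (st k h) (act k h)) H%:R.
set D := fun k h => \sum_s' P h (st k h) (act k h) s' * Vk k h.+1 s' - Vk k h.+1 (st k h.+1).
have episode k : (1 <= k <= K)%N ->
    Vuk K 1 s1 <= \sum_(1 <= h < H.+1) (m k h + D k h).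
  move=> kK; apply: le_trans (VuK_le_Vuk kK) _.
  apply: le_trans (_ : Vk k 1 s1 <= _); first by case: (optimism kK (h := 1) isT s1).
  rewrite Vk1_telescope // big_nat [X in _ <= X]big_nat; apply: ler_sum => h /andP [h1 hH].
  by have := Vk_sub_le kK (h := h) ltac:(lia); rewrite /m /D; lra.
have -> : K%:R * Vuk K 1 s1 = \sum_(1 <= k < K.+1) Vuk K 1 s1.
  by rewrite sumr_const_nat subn1 mulr_natl.
apply: le_trans (_ : _ <= \sum_(1 <= k < K.+1) \sum_(1 <= h < H.+1) (m k h + D k h)) _.
  by rewrite big_nat [X in _ <= X]big_nat; apply: ler_sum => k /andP [k1 kK]; apply: episode; lia.
under eq_bigr do rewrite big_split /=.
rewrite big_split /= lerD // exchange_big_nat /=.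
set X := beta * _ * _.
have -> : H%:R * X = \sum_(1 <= h < H.+1) X by rewrite sumr_const_nat subn1 mulr_natl.
rewrite big_nat [X in _ <= X]big_nat.
by apply: ler_sum => h /andP [h1 hH]; apply: sum_min_uk_le; lia.
Qed.

Lemma ln1DK_le : ln (1 + K%:R) <= d%:R * logD.
Proof.
set y := K%:R * H%:R ^+ 2 * B ^+ 2 / d%:R.
have d0 : 0 < d%:R :> R by rewrite ltr0n.
have y0 : 0 <= y by apply: divr_ge0 => //; rewrite !mulr_ge0 // ltW.
rewrite mulr_natl -lnXn; last lra.
apply: ln_le_ln; first by rewrite ltr_pwDr // ltr0n.
apply: le_trans (exprn_ge1Dmul d y0); rewrite lerD2l.
have -> : d%:R * y = K%:R * (H%:R ^+ 2 * B ^+ 2) by rewrite /y; field; rewrite gt_eqF.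
rewrite ler_peMr // mulr_ege1 // exprn_ege1 ?ler1n ?B_ge1 //.
Qed.

Lemma sqrt_martingale_le : Num.sqrt (2 * H%:R ^+ 3 * K%:R * ln (4 / delta))
  <= Num.sqrt 2 * H%:R * (H%:R * Num.sqrt (d%:R * logL)) * Num.sqrt K%:R.
Proof.
have H1 : 1 <= H%:R :> R by rewrite ler1n.
have L1 := logL_ge1.
have dL : 1 <= d%:R * logL by rewrite mulr_ege1 ?ler1n.
have [delta0 _] := andP delta01.
have ln4delta : ln (4 / delta) <= logL by apply: ln_le_ln argL_ge.2; rewrite divr_gt0.
apply: sqrtr_le; first by rewrite !mulr_ge0 ?sqrtr_ge0.
rewrite !exprMn !sqr_sqrtr ?mulr_ge0 ?ler0n //; last lra.
have HdL : ln (4 / delta) <= H%:R * (d%:R * logL).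
  by apply: le_trans ln4delta _; rewrite mulrA ler_peMl ?mulr_ege1 ?ler1n //; lra.
have : 0 <= H%:R ^+ 3 * K%:R :> R by rewrite mulr_ge0 ?exprn_ge0.
nra.
Qed.

Lemma VuK_le_rate :
  Vuk K 1 s1 <= 6 * H%:R ^+ 2 * d%:R *
    Num.sqrt (ln (4 * H%:R ^+ 3 * K%:R * B ^+ 2 / delta) * logD / K%:R).
Proof.
have H1 : 1 <= H%:R :> R by rewrite ler1n.
have K1 : 1 <= K%:R :> R by rewrite ler1n.
have L1 := logL_ge1; have D0 := logD_ge0.
set a := H%:R * Num.sqrt (d%:R * logL); set q := Num.sqrt (d%:R * logD).
have a_ge0 : 0 <= a by rewrite mulr_ge0 ?sqrtr_ge0.
have a2 : a ^+ 2 = H%:R ^+ 2 * (d%:R * logL) by rewrite exprMn sqr_sqrtr ?mulr_ge0 //; lra.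
have q2 : q ^+ 2 = d%:R * logD by rewrite sqr_sqrtr ?mulr_ge0.
have ln4K : ln (4 * K%:R) <= a ^+ 2.
  apply: le_trans (ln_le_ln _ argL_ge.1) _; first lra.
  by rewrite a2 mulrA ler_peMl ?mulr_ege1 ?exprn_ege1 ?ler1n //; lra.
have VH : Vuk K 1 s1 <= H%:R by case/andP: (@Vuk_ge0_le K 1 s1 isT).
have KV : K%:R * Vuk K 1 s1 <=
    H%:R * (a + 1) * Num.sqrt (10 * K%:R) * q + Num.sqrt 2 * H%:R * a * Num.sqrt K%:R.
  apply: le_trans K_mul_VuK_le _; rewrite beta_eq -/a -/q.
  have -> : H%:R * ((a + 1) * Num.sqrt (10 * K%:R) * q) =
    H%:R * (a + 1) * Num.sqrt (10 * K%:R) * q by ring.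
  by rewrite lerD2l sqrt_martingale_le.
suff -> : 6 * H%:R ^+ 2 * d%:R *
    Num.sqrt (ln (4 * H%:R ^+ 3 * K%:R * B ^+ 2 / delta) * logD / K%:R) =
  6 * H%:R * a * q / Num.sqrt K%:R.
  by apply: le_rate_of_sum_le; rewrite ?sqrtr_ge0 ?q2 ?ln1DK_le.
have -> : 4 * H%:R ^+ 3 * K%:R * B ^+ 2 / delta = argL by rewrite /lamB invrK.
have sd : Num.sqrt d%:R * Num.sqrt d%:R = d%:R :> R by rewrite -expr2 sqr_sqrtr.
rewrite (@sqrtrM _ (logL * logD)) ?sqrtrV ?mulr_ge0 //; try lra.
rewrite (@sqrtrM _ logL) /a /q ?(@sqrtrM _ d%:R) //; try lra.
by rewrite -[X in 6 * _ * X * _ = _]sd; ring.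
Qed.

End Algorithm1.

Theorem lemma9 (R : realType) (S A : finType) (a0 : A) (d H K : nat) (B delta : R)
  (phi : S -> A -> S -> 'cV[R]_d) (theta : nat -> 'cV[R]_d)
  (P : nat -> S -> A -> S -> R) (s1 : S)
  (Vt : nat -> nat -> S -> A -> S -> R) (pi : nat -> nat -> S -> A)
  (st : nat -> nat -> S) (act : nat -> nat -> A) :
  (0 < d)%N -> (0 < H)%N -> (0 < K)%N -> 0 < B -> 0 < delta < 1 ->
  (* transition kernel *)
  (forall h s a, (1 <= h <= H)%N ->
     (forall s', 0 <= P h s a s') /\ \sum_(s' : S) P h s a s' = 1) ->
  (* linear mixture structure *)
  (forall s a (V : S -> R), (forall s', 0 <= V s' <= 1) ->
     wnorm 1%:M (phiV phi s a V) <= 1) ->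
  (forall h, (1 <= h <= H)%N -> wnorm 1%:M (theta h) <= B) ->
  (forall h s a s', (1 <= h <= H)%N -> P h s a s' = ((theta h)^T *m phi s a s') ord0 ord0) ->
  (* Algorithm 1: choice of tilde V_{k,h+1,s,a} as a maximizer over V : S -> [0,H] *)
  (forall k h s a, (1 <= k <= K)%N -> (1 <= h <= H)%N ->
     (forall s', 0 <= Vt k h s a s' <= H%:R) /\
     (forall V : S -> R, (forall s', 0 <= V s' <= H%:R) ->
        wnorm (invmx (Lam phi B Vt st act k h)) (phiV phi s a V)
        <= wnorm (invmx (Lam phi B Vt st act k h)) (featV phi Vt k h s a))) ->
  (* Algorithm 1: greedy policy pi_{k,h}(s) in argmax_a Q_{k,h}(s,a) *)
  (forall k h s a, (1 <= k <= K)%N -> (1 <= h <= H)%N ->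
     Qk phi B delta H K Vt st act a0 k h s a
     <= Qk phi B delta H K Vt st act a0 k h s (pi k h s)) ->
  (* trajectories: executed from s1 with pi_k, next states drawn from P_h *)
  (forall k, (1 <= k <= K)%N ->
     st k 1%N = s1 /\
     forall h, (1 <= h <= H)%N ->
       act k h = pi k h (st k h) /\ 0 < P h (st k h) (act k h) (st k h.+1)) ->
  (* event E1 (i) *)
  (forall k h, (1 <= k <= K)%N -> (1 <= h <= H)%N ->
     wnorm (Lam phi B Vt st act k h) (thetahat phi B Vt st act k h - theta h)
     <= betaB d H K B delta) ->
  (* event E1 (ii) *)
  \sum_(1 <= k < K.+1) \sum_(1 <= h < H.+1)
     (\sum_(s' : S) P h (st k h) (act k h) s' * Valg phi B delta H K Vt st act a0 k h.+1 s'
      - Valg phi B delta H K Vt st act a0 k h.+1 (st k h.+1))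
   <= Num.sqrt (2 * H%:R ^+ 3 * K%:R * ln (4 / delta)) ->
  Vstar a0 H P (bonus phi B delta H K Vt st act K) 1%N s1
  <= 6 * H%:R ^+ 2 * d%:R *
     Num.sqrt (ln (4 * H%:R ^+ 3 * K%:R * B ^+ 2 / delta)
               * ln (1 + K%:R * H%:R ^+ 2 * B ^+ 2 / d%:R) / K%:R).
Proof.
move=> d_gt0 H_gt0 K_gt0 B_gt0 delta01 P_dist phiV_le1 theta_le P_linear Vt_choice
  pi_greedy traj theta_conf martingale_le.
apply: (VuK_le_rate (theta := theta) (pi := pi)) => //.
- by move=> h s a s' /(P_dist h s a) [+ _]; apply.
- by move=> h s a /(P_dist h s a) [].
- by move=> k h s a kK hH; case: (Vt_choice k h s a kK hH).
- by move=> k h s a kK hH; case: (Vt_choice k h s a kK hH).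
- by move=> k /traj [].
- by move=> k h kK hH; case: (traj k kK) => _ /(_ h hH) [].
Qed.
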